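(* Let $(V,\Omega)$ be a finite-dimensional real symplectic vector space and let $A:V\to V$ be a linear map with $\Omega(Ax,y)+\Omega(x,Ay)=0$ for all $x,y\in V$ and $A^2=-I$. Let $\theta^A$ be the one-form on $V$ given by $\theta^A_z(v_z)=\frac{1}{2}\Omega(z-Az,v)$. Then ${\rm Aut}(V,\theta^A)=\{g\in{\rm Sp}(V,\Omega): gA=Ag\}$, where ${\rm Aut}(V,\theta^A)$ is the group of all diffeomorphisms $g:V\to V$ satisfying $g^*\theta^A=\theta^A$.
   Context: $V$ is a finite-dimensional real vector space and $\Omega$ a nonsingular alternating bilinear form on $V$. For $z,v\in V$, $v_z\in T_zV$ denotes the tangent vector at $z$ corresponding to $v$ under the canonical identification $T_zV\cong V$. Equivalently, $\theta^A=\theta^0+d\psi^A$ where $\theta^0_z(v_z)=\frac12\Omega(z,v)$ and $\psi^A(z)=\frac14\Omega(z,Az)$. For a smooth map $g:V\to V$, $(g^*\theta^A)_z(v_z)=\frac12\Omega(g(z)-Ag(z),g'_z v)$, where $g'_z$ is the derivative of $g$ at $z$. ${\rm Sp}(V,\Omega)$ is the group of linear automorphisms of $V$ preserving $\Omega$. *)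

From HB Require Import structures.
From mathcomp Require Import all_boot all_order all_algebra.
From mathcomp Require Import all_classical all_reals all_analysis.
Set Implicit Arguments. Unset Strict Implicit. Unset Printing Implicit Defensive.
Import Order.TTheory GRing.Theory Num.Theory.
Import numFieldNormedType.Exports.
Local Open Scope ring_scope.

Section Defs.
Variables (R : realType) (n : nat).
Local Notation V := 'rV[R]_n.

Definition sform (Om : 'M[R]_n) (x y : V) : R := (x *m Om *m y^T) 0 0.

Definition symplectic_form (Om : 'M[R]_n) : Prop :=
  (forall x : V, sform Om x x = 0) /\ Om \in unitmx.

Definition linmx (M : 'M[R]_n) : V -> V := fun x => x *m M.

Definition thetaA (Om A : 'M[R]_n) (z v : V) : R :=
  2^-1 * sform Om (z - linmx A z) v.

Fixpoint iter_deriv (f : V -> V) (vs : seq V) : V -> V :=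
  match vs with
  | [::] => f
  | v :: vs' => fun z => 'D_v (iter_deriv f vs') z
  end.

(* C^infinity : all iterated directional derivatives exist and are
   (Frechet) differentiable everywhere *)
Definition smooth (f : V -> V) : Prop :=
  forall (vs : seq V) (z : V), differentiable (iter_deriv f vs) z.

Definition diffeomorphism (g : V -> V) : Prop :=
  smooth g /\ exists h : V -> V, [/\ cancel g h, cancel h g & smooth h].

(* (g^* theta)_z (v_z) = theta_{g z} (g'_z v) *)
Definition preserves_theta (Om A : 'M[R]_n) (g : V -> V) : Prop :=
  forall z v : V, thetaA Om A (g z) ('d g z v) = thetaA Om A z v.

Definition Aut_theta (Om A : 'M[R]_n) : set (V -> V) :=
  [set g | diffeomorphism g /\ preserves_theta Om A g].

Definition Sp (Om : 'M[R]_n) : set (V -> V) :=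
  [set g | exists M : 'M[R]_n, [/\ M \in unitmx, g = linmx M &
     forall x y : V, sform Om (g x) (g y) = sform Om x y]].

End Defs.

From HB Require Import structures.
From mathcomp Require Import all_boot all_order all_algebra.
From mathcomp Require Import all_classical all_reals all_analysis.
From mathcomp Require Import ring lra.
Set Implicit Arguments. Unset Strict Implicit. Unset Printing Implicit Defensive.
Import Order.TTheory GRing.Theory Num.Theory.
Import numFieldNormedType.Exports.
Local Open Scope ring_scope.
Local Open Scope classical_set_scope.

(* An automorphism g of theta^A satisfies beta (g z) (g'_z v) = beta z v, where
   beta x y = Omega (x - A x, y).  Differentiating in a direction w and antisymmetrizing
   in v, w (the second derivatives cancel by Schwarz) shows that every g'_z is symplectic;
   pairing against the surjective g'_z then gives g'_z (z - A z) = g z - A (g z), i.e. g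
   maps the vector field z - A z to itself.  As A^2 = -1 its flow is e^s (cos s - sin s A),
   the homothety e^(-2 pi) at time -2 pi, so g commutes with a contraction; being
   differentiable at 0, g is then linear.  The converse is a direct computation. *)

Section directional_derivative.
Context {R : realType}.

Lemma cvg_is_derive {V W : normedModType R} (f : V -> W) x v l :
  (fun h : R => h^-1 *: (f (h *: v + x) - f x)) @ 0^' --> l -> is_derive x v f l.
Proof.
move=> fl; have df : derivable f x v by apply/cvg_ex; exists l.
by apply: DeriveDef => //; apply: cvg_lim.
Qed.

Lemma is_derive_cvg {V W : normedModType R} (f : V -> W) x v l :
  is_derive x v f l -> (fun h : R => h^-1 *: (f (h *: v + x) - f x)) @ 0^' --> l.
Proof. by case=> df <-; exact: df. Qed.

Lemma is_deriveZl {V W : normedModType R} (k : V -> R) (c : W) x v dk :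
  is_derive x v k dk -> is_derive x v (fun y => k y *: c) (dk *: c).
Proof.
move=> kdk; apply: cvg_is_derive.
have -> : (fun h : R => h^-1 *: (k (h *: v + x) *: c - k x *: c)) =
    (fun h : R => (h^-1 *: (k (h *: v + x) - k x)) *: c).
  by apply/funext => h; rewrite -scalerBl scalerA.
have := cvgZr_tmp (a := c) (is_derive_cvg kdk); exact.
Qed.

Lemma is_derive_line {V W : normedModType R} (f df : V -> W) (p v : V) (t : R) :
  (forall y, is_derive y v f (df y)) ->
  is_derive t 1 (fun s : R => f (p + s *: v)) (df (p + t *: v)).
Proof.
move=> fdf; apply: cvg_is_derive.
have -> : (fun h : R => h^-1 *: (f (p + (h *: 1 + t) *: v) - f (p + t *: v))) =
    (fun h : R => h^-1 *: (f (h *: v + (p + t *: v)) - f (p + t *: v))).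
  by apply/funext => h; rewrite [_%:A]mulr1 scalerDl addrCA addrA.
exact: is_derive_cvg.
Qed.

Lemma is_derive1_comp_diff {V W : normedModType R} (f : V -> W) (c : R -> V) t dc :
  differentiable f (c t) -> is_derive t 1 c dc ->
  is_derive t 1 (f \o c) ('d f (c t) dc).
Proof.
move=> df [dc1 <-].
have dct : differentiable c t by apply/derivable1_diffP.
have dfc : differentiable (f \o c) t by apply: differentiable_comp.
apply: DeriveDef; first exact: diff_derivable.
by rewrite (deriveE _ dfc) (diff_comp dct df) /= (deriveE _ dct).
Qed.

Lemma derive_cancel {V : normedModType R} (g h : V -> V) z y :
  differentiable g z -> differentiable h (g z) -> cancel g h -> cancel h g ->
  'D_('D_y h (g z)) g z = y.
Proof.
move=> dg dh gK hK.
have dgh : differentiable g (h (g z)) by rewrite gK.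
have : 'D_y (g \o h) (g z) = y.
  by rewrite (_ : g \o h = id) ?derive_id //; apply/funext => t; exact: hK.
rewrite (deriveE _ (differentiable_comp dh dgh)) (diff_comp dh dgh) /=.
by rewrite (deriveE _ dg) (deriveE _ dh) gK.
Qed.

Lemma cvgn_dnbhs0 (u : nat -> R) :
  u @ \oo --> 0 -> (forall k, u k != 0) -> u @ \oo --> (0 : R)^'.
Proof.
move=> u0 u_neq0 A A0.
have : \forall k \near \oo, (u k != 0 -> A (u k)) := u0 _ A0.
by apply: filterS => k; apply.
Qed.

(* Sampling the difference quotient along h = c ^+ k, where it is constant. *)
Lemma homogeneous_derive {V W : normedModType R} (g : V -> W) (c : R) :
  0 < c < 1 -> differentiable g 0 -> (forall z, g (c *: z) = c *: g z) ->
  forall z, g z = 'D_z g 0.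
Proof.
move=> /andP[c0 c1] dg gc z.
have g0 : g 0 = 0.
  have := gc 0; rewrite scaler0 => /eqP; rewrite -subr_eq0 -{1}[g 0]scale1r.
  by rewrite -scalerBl scaler_eq0 subr_eq0 eq_sym (lt_eqF c1) => /eqP.
have gck : forall k, g (c ^+ k *: z) = c ^+ k *: g z.
  elim=> [|k IH]; first by rewrite expr0 !scale1r.
  by rewrite exprS -scalerA gc IH scalerA.
have ck0 : (fun k => c ^+ k) @ \oo --> (0 : R)^'.
  apply: cvgn_dnbhs0; first by apply: cvg_expr; rewrite gtr0_norm.
  by move=> k; rewrite expf_neq0 // gt_eqF.
have := cvg_comp _ _ ck0 (is_derive_cvg (derivableP (diff_derivable (v := z) dg))).
have -> : (fun h : R => h^-1 *: (g (h *: z + 0) - g 0)) \o (fun k => c ^+ k) = cst (g z).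
  apply/funext => k /=; rewrite addr0 g0 subr0 gck scalerA mulVf ?scale1r //.
  by rewrite expf_neq0 // gt_eqF.
by move=> C; exact: cvg_unique _ (cvg_cst (g z)) C.
Qed.

End directional_derivative.

Lemma is_derive_coord {R : realType} {V : normedModType R} m n
    (F : V -> 'M[R]_(m, n)) x v dF i j :
  is_derive x v F dF -> is_derive x v (fun y => F y i j) (dF i j).
Proof.
move=> [dFx <-]; apply: DeriveDef; first exact: (derivable_mxP _ _ _).1 dFx i j.
by rewrite derive_mx // mxE.
Qed.

Section second_differences.
Context {R : realType} {V : normedModType R}.

Lemma second_difference_mvt (F DF DDF : V -> R) (a b p : V) (s : R) :
  (forall y, is_derive y a F (DF y)) -> (forall y, is_derive y b DF (DDF y)) -> 0 < s ->
  exists xi eta, [/\ 0 < xi < s, 0 < eta < s &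
     F (p + s *: b + s *: a) - F (p + s *: a) - (F (p + s *: b) - F p)
       = s * s * DDF (p + xi *: a + eta *: b)].
Proof.
move=> FDF DFDDF s0.
pose phi (x : R) := F (p + s *: b + x *: a) - F (p + x *: a).
have dphi (x : R) : is_derive x 1 phi (DF (p + s *: b + x *: a) - DF (p + x *: a)).
  exact: is_deriveB (is_derive_line (p + s *: b) x FDF) (is_derive_line p x FDF).
have cphi : {within `[0, s], continuous phi}.
  by apply: derivable_within_continuous => x _; case: (dphi x).
have [xi xiI Ephi] := MVT s0 (fun x _ => dphi x) cphi.
pose psi (y : R) := DF (p + xi *: a + y *: b).
have dpsi (y : R) : is_derive y 1 psi (DDF (p + xi *: a + y *: b)) by exact: is_derive_line.
have cpsi : {within `[0, s], continuous psi}.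
  by apply: derivable_within_continuous => x _; case: (dpsi x).
have [eta etaI Epsi] := MVT s0 (fun x _ => dpsi x) cpsi.
exists xi, eta; split; [by move: xiI; rewrite in_itv | by move: etaI; rewrite in_itv |].
move: Ephi Epsi; rewrite /phi /psi !scale0r !addr0 subr0 => ->.
by rewrite [p + s *: b + xi *: a]addrAC => ->; ring.
Qed.

Lemma ball_parallelogram (p v w : V) (d xi eta : R) :
  0 < d -> 0 < xi < d / (`|v| + `|w| + 1) -> 0 < eta < d / (`|v| + `|w| + 1) ->
  ball p d (p + xi *: v + eta *: w).
Proof.
move=> d0 /andP[xi0 xis] /andP[eta0 etas].
rewrite -ball_normE /= -addrA opprD addrA subrr add0r normrN.
have nv := normr_ge0 v; have nw := normr_ge0 w.
have vw1 : 0 < `|v| + `|w| + 1 by rewrite ltr_wpDl // addr_ge0.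
apply: le_lt_trans (ler_normD _ _) _; rewrite !normrZ !gtr0_norm //.
rewrite -(divfK (lt0r_neq0 vw1) d).
move: (d / _) xis etas => s xis etas; nra.
Qed.

End second_differences.

Section mixed_partials.
Context {R : realType} {V : normedModType R}.
Variables (f Dv Dw Dwv Dvw : V -> R) (v w : V).
Hypotheses (fDv : forall y, is_derive y v f (Dv y)) (fDw : forall y, is_derive y w f (Dw y)).
Hypothesis DvDwv : forall y, is_derive y w Dv (Dwv y).
Hypothesis DwDvw : forall y, is_derive y v Dw (Dvw y).

(* Both second differences of f over the square with side s are mean values. *)
Lemma mixed_partials_near (p : V) (s : R) : 0 < s ->
  exists xi eta xi' eta',
   [/\ 0 < xi < s, 0 < eta < s, 0 < xi' < s, 0 < eta' < s &
    Dwv (p + xi *: v + eta *: w) = Dvw (p + xi' *: w + eta' *: v)].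
Proof.
move=> s0.
have [xi [eta [xiI etaI E]]] := second_difference_mvt p fDv DvDwv s0.
have [xi' [eta' [xiI' etaI' E']]] := second_difference_mvt p fDw DwDvw s0.
exists xi, eta, xi', eta'; split => //.
apply: (mulfI (mulf_neq0 (lt0r_neq0 s0) (lt0r_neq0 s0))).
by rewrite -E -E' [p + s *: v + s *: w]addrAC; ring.
Qed.

Lemma mixed_partials_eq (p : V) :
  {for p, continuous Dwv} -> {for p, continuous Dvw} -> Dwv p = Dvw p.
Proof.
move=> cwv cvw; apply/eqP; rewrite -subr_eq0; apply/negPn/negP => d_neq0.
set d := Dwv p - Dvw p in d_neq0.
have e0 : 0 < `|d| / 2 by rewrite divr_gt0 // normr_gt0.
have Nwv : \forall t \near p, `|Dwv p - Dwv t| < `|d| / 2.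
  by move: cwv => /cvgrPdist_lt; apply.
have Nvw : \forall t \near p, `|Dvw p - Dvw t| < `|d| / 2.
  by move: cvw => /cvgrPdist_lt; apply.
have [r r0 near_r] := (nbhs_ballP _ _).1 (filterI Nwv Nvw).
have vw1 : 0 < `|v| + `|w| + 1 by rewrite ltr_wpDl // addr_ge0.
have s0 : 0 < r / (`|v| + `|w| + 1) by rewrite divr_gt0.
have [xi [eta [xi' [eta' [xiI etaI xiI' etaI' E]]]]] := mixed_partials_near p s0.
have [Bwv _] := near_r _ (ball_parallelogram p r0 xiI etaI).
rewrite [`|v| + `|w|]addrC in xiI' etaI'.
have [_ Bvw] := near_r _ (ball_parallelogram p r0 xiI' etaI').
have dE : d = (Dwv p - Dwv (p + xi *: v + eta *: w))
              - (Dvw p - Dvw (p + xi' *: w + eta' *: v)) by rewrite /d E; ring.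
have : `|d| < `|d|.
  rewrite {1}dE; apply: le_lt_trans (ler_normB _ _) _.
  by rewrite [ltRHS]splitr ltrD.
by rewrite ltxx.
Qed.

End mixed_partials.

Section row_vectors.
Variables (R : realType) (n : nat).
Local Notation V := 'rV[R]_n.
Implicit Types (M : 'M[R]_n) (g : V -> V).

Lemma smooth_is_derive g (vs : seq V) y u : smooth g ->
  is_derive y u (iter_deriv g vs) ('D_u (iter_deriv g vs) y).
Proof. by move=> sg; apply/derivableP/diff_derivable; exact: sg. Qed.

Lemma smooth_deriveC g (p v w : V) : smooth g ->
  'D_w (fun z => 'D_v g z) p = 'D_v (fun z => 'D_w g z) p.
Proof.
move=> sg; apply/matrixP => i j.
have cont2 (a b : V) : {for p, continuous (fun y => 'D_b (fun z => 'D_a g z) y i j)}.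
  apply: (@continuous_comp _ _ _ (fun y => 'D_b (fun z => 'D_a g z) y)
           (fun M : 'M[R]_(1, n) => M i j)).
    exact: differentiable_continuous (sg [:: b; a] p).
  exact: coord_continuous.
apply: (mixed_partials_eq (f := fun y => g y i j)) (cont2 _ _) (cont2 _ _) => y.
- exact: is_derive_coord (smooth_is_derive [::] y v sg).
- exact: is_derive_coord (smooth_is_derive [::] y w sg).
- exact: is_derive_coord (smooth_is_derive [:: v] y w sg).
- exact: is_derive_coord (smooth_is_derive [:: w] y v sg).
Qed.

Lemma is_derive_mulmx_coord (W : normedModType R) M (F : W -> V) x w dF k :
  is_derive x w F dF -> is_derive x w (fun y => (F y *m M) 0 k) ((dF *m M) 0 k).
Proof.
move=> FdF.
have -> : (fun y => (F y *m M) 0 k) = \sum_(l < n) (M l k \*: (fun y => F y 0 l)).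
  by apply/funext => y; rewrite fct_sumE mxE; apply: eq_bigr => l _; rewrite /= mulrC.
apply: is_derive_eq.
  by apply: is_derive_sum => l; apply: is_deriveZ; apply: is_derive_coord.
by rewrite mxE; apply: eq_bigr => l _; rewrite mulrC.
Qed.

Lemma is_derive_sform (W : normedModType R) M (F G : W -> V) x w dF dG :
  is_derive x w F dF -> is_derive x w G dG ->
  is_derive x w (fun y => sform M (F y) (G y)) (sform M dF (G x) + sform M (F x) dG).
Proof.
move=> FdF GdG.
have -> : (fun y => sform M (F y) (G y)) =
    \sum_(k < n) ((fun y => (F y *m M) 0 k) * (fun y => G y 0 k)).
  apply/funext => y; rewrite fct_sumE /sform mxE; apply: eq_bigr => k _ /=.
  by rewrite mulrfctE [(G y)^T _ _]mxE.
apply: is_derive_eq.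
  apply: is_derive_sum => k; apply: is_deriveM; first exact: is_derive_mulmx_coord.
  exact: is_derive_coord.
rewrite /sform !mxE -big_split /=; apply: eq_bigr => k _.
by rewrite [(G x)^T _ _]mxE [dG^T _ _]mxE addrC [_ * G x 0 k]mulrC.
Qed.

Lemma is_derive_linmx M (z v : V) : is_derive z v (linmx M) (linmx M v).
Proof.
apply: cvg_is_derive; apply: cvg_near_cst.
rewrite near_withinE; near=> h => h_neq0 /=.
by rewrite /linmx mulmxDl addrK scalemxAl scalerA mulVf // scale1r.
Unshelve. all: by end_near. Qed.

Lemma derive_linmx M (z v : V) : 'D_v (linmx M) z = linmx M v.
Proof. by case: (is_derive_linmx M z v). Qed.

Lemma differentiable_linmx M (z : V) : differentiable (linmx M) z.
Proof.
have -> : linmx M = \sum_(i < n) (fun x : V => x 0 i *: row i M).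
  by apply/funext => x; rewrite fct_sumE /linmx mulmx_sum_row.
apply: differentiable_sum => i; apply: differentiableZl.
exact: differentiable_coord.
Qed.

Lemma diff_linmx M (z : V) : 'd (linmx M) z = linmx M :> (V -> V).
Proof.
apply/funext => v; rewrite -(derive_linmx M z) deriveE //; exact: differentiable_linmx.
Qed.

Lemma smooth_linmx M : smooth (linmx M).
Proof.
have iter_linmx (vs : seq V) :
    iter_deriv (linmx M) vs = linmx M \/ exists c, iter_deriv (linmx M) vs = cst c.
  elim: vs => [|v vs [IH|[c IH]]]; [by left | right | right].
  - by exists (linmx M v); apply/funext => z /=; rewrite IH derive_linmx.
  - by exists 0; apply/funext => z /=; rewrite IH derive_cst.
move=> vs z; case: (iter_linmx vs) => [->|[c ->]].
  exact: differentiable_linmx.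
exact: differentiable_cst.
Qed.

End row_vectors.

Section sform_algebra.
Variables (R : realType) (n : nat).
Local Notation V := 'rV[R]_n.
Implicit Types (Om A : 'M[R]_n) (x y z : V).

Lemma sformDl Om x y z : sform Om (x + y) z = sform Om x z + sform Om y z.
Proof. by rewrite /sform !mulmxDl mxE. Qed.

Lemma sformNl Om x z : sform Om (- x) z = - sform Om x z.
Proof. by rewrite /sform !mulNmx mxE. Qed.

Lemma sformBl Om x y z : sform Om (x - y) z = sform Om x z - sform Om y z.
Proof. by rewrite sformDl sformNl. Qed.

Lemma sformDr Om x y z : sform Om z (x + y) = sform Om z x + sform Om z y.
Proof. by rewrite /sform linearD /= mulmxDr mxE. Qed.

Lemma sform_antisym Om x y : (forall x, sform Om x x = 0) ->
  sform Om x y = - sform Om y x.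
Proof.
move=> Om_alt; apply/eqP; rewrite -addr_eq0; apply/eqP.
by have := Om_alt (x + y); rewrite sformDl !sformDr !Om_alt add0r addr0.
Qed.

(* Test against y := x Om: the sum of squares of the entries of x Om vanishes. *)
Lemma sform_nondeg Om x : Om \in unitmx -> (forall y, sform Om x y = 0) -> x = 0.
Proof.
move=> Om_unit x_Om0; have := x_Om0 (x *m Om); rewrite /sform.
set u := x *m Om => uu0.
suff u0 : u = 0 by rewrite -(mulmxK Om_unit x) -/u u0 mul0mx.
apply/matrixP => i j; rewrite (ord1 i) [RHS]mxE.
move: uu0; rewrite mxE => /eqP; rewrite psumr_eq0; last first.
  by move=> k _; rewrite [u^T _ _]mxE -expr2 sqr_ge0.
move=> /allP /(_ j (mem_index_enum j)).
by rewrite [u^T _ _]mxE -expr2 sqrf_eq0 => /eqP.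
Qed.

Lemma sform_1BmxE Om A x y : sform ((1 - A) *m Om) x y = sform Om (x - linmx A x) y.
Proof. by rewrite /sform /linmx mulmxA mulmxBr mulmx1. Qed.

Lemma thetaAE Om A z v : thetaA Om A z v = 2^-1 * sform ((1 - A) *m Om) z v.
Proof. by rewrite /thetaA sform_1BmxE. Qed.

Lemma sform_1Bmx_skew Om A x y : (forall x, sform Om x x = 0) ->
  (forall x y, sform Om (linmx A x) y + sform Om x (linmx A y) = 0) ->
  sform ((1 - A) *m Om) x y - sform ((1 - A) *m Om) y x = 2 * sform Om x y.
Proof.
move=> Om_alt A_skew; rewrite !sform_1BmxE !sformBl.
rewrite (sform_antisym y x Om_alt) (sform_antisym (linmx A y) x Om_alt).
by move/eqP: (A_skew x y); rewrite addr_eq0 => /eqP ->; ring.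
Qed.

End sform_algebra.

Section theta_automorphisms.
Variables (R : realType) (n : nat) (Om A : 'M[R]_n).
Local Notation V := 'rV[R]_n.
Local Notation beta := (sform ((1 - A) *m Om)).
Hypotheses (Om_alt : forall x : V, sform Om x x = 0) (Om_unit : Om \in unitmx).
Hypothesis A_skew : forall x y : V, sform Om (linmx A x) y + sform Om x (linmx A y) = 0.
Variable g : V -> V.
Hypotheses (g_smooth : smooth g) (g_theta : preserves_theta Om A g).

Lemma preserves_theta_beta (z v : V) : beta (g z) ('D_v g z) = beta z v.
Proof.
have := g_theta z v; rewrite -deriveE; last exact: g_smooth [::] z.
have two_neq0 : 2^-1 != 0 :> R by rewrite invr_eq0 pnatr_eq0.
by rewrite !thetaAE => /(mulfI two_neq0).
Qed.

(* Differentiate beta (g z) (D_v g z) = beta z v in direction w and antisymmetrize in v, w: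
   the second-order terms cancel by the symmetry of mixed partials. *)
Lemma preserves_theta_symplectic (z v w : V) :
  sform Om ('D_w g z) ('D_v g z) = sform Om w v.
Proof.
have d_beta_g (a b : V) : 'D_b (fun y => beta (g y) ('D_a g y)) z =
    beta ('D_b g z) ('D_a g z) + beta (g z) ('D_b (fun y => 'D_a g y) z).
  by case: (is_derive_sform ((1 - A) *m Om) (smooth_is_derive [::] z b g_smooth)
                           (smooth_is_derive [:: a] z b g_smooth)).
have d_beta (a b : V) : 'D_b (fun y => beta (g y) ('D_a g y)) z = beta b a.
  under eq_fun do rewrite preserves_theta_beta.
  case: (is_derive_sform ((1 - A) *m Om) (is_derive_id z b) (is_derive_cst a z b)) => _ ->.
  by rewrite /sform trmx0 mulmx0 [X in _ + X]mxE addr0.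
have := d_beta_g v w; rewrite d_beta (smooth_deriveC z v w g_smooth) => Ewv.
have := d_beta_g w v; rewrite d_beta => Evw.
have two_neq0 : 2 != 0 :> R by rewrite pnatr_eq0.
apply: (mulfI two_neq0).
rewrite -(sform_1Bmx_skew _ _ Om_alt A_skew) -(sform_1Bmx_skew w v Om_alt A_skew).
by rewrite Ewv Evw; ring.
Qed.

Variable h : V -> V.
Hypotheses (h_smooth : smooth h) (gK : cancel g h) (hK : cancel h g).

(* Pair with an arbitrary vector D_y g z, using surjectivity of the derivative. *)
Lemma preserves_theta_euler (z : V) : 'D_(z - linmx A z) g z = g z - linmx A (g z).
Proof.
apply/eqP; rewrite eq_sym -subr_eq0; apply/eqP; apply: (sform_nondeg Om_unit) => y.
rewrite -(derive_cancel y (g_smooth [::] z) (h_smooth [::] (g z)) gK hK) sformBl.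
by rewrite preserves_theta_symplectic -sform_1BmxE preserves_theta_beta sform_1BmxE subrr.
Qed.

End theta_automorphisms.

Lemma planar_invariant {R : realType} (a b : R -> R) :
  (forall s : R, is_derive s 1 a (a s - b s)) -> (forall s : R, is_derive s 1 b (a s + b s)) ->
  forall s, expR (- s) * (cos s * a s + sin s * b s) = a 0.
Proof.
move=> da db s.
pose K (t : R) := expR (- t) * (cos t * a t + sin t * b t).
have dK (t : R) : is_derive t 1 K 0.
  have dexpN : is_derive t 1 (fun t => expR (- t)) (expR (- t) * -1).
    exact: (is_derive1_comp (f := expR) (g := fun t : R => - t) (is_derive_expR (- t))
              (is_deriveNid t 1)).
  have := is_deriveM dexpN (is_deriveD (is_deriveM (is_derive_cos t) (da t))
                                        (is_deriveM (is_derive_sin t) (db t))).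
  move=> /is_derive_eq; apply.
  by rewrite -[(_ + _) t]/(cos t * a t + sin t * b t) /GRing.scale /=; ring.
have := is_derive_0_is_cst s 0 dK.
by rewrite /K oppr0 expR0 cos0 sin0 => ->; ring.
Qed.

Section rotation_flow.
Variables (R : realType) (n : nat) (A : 'M[R]_n).
Local Notation V := 'rV[R]_n.
Hypothesis A2 : forall x : V, linmx A (linmx A x) = - x.

(* A solution of u' = (1 - A) u is u s = e^s (cos s - sin s A) (u 0), since A^2 = -1. *)
Lemma expansion_curve (u : R -> V) : (forall s : R, is_derive s 1 u (u s - linmx A (u s))) ->
  u (- (pi *+ 2)) = expR (- (pi *+ 2)) *: u 0.
Proof.
move=> du; apply/matrixP => i j; rewrite (ord1 i) [RHS]mxE.
have da (s : R) : is_derive s 1 (fun t => u t 0 j) (u s 0 j - linmx A (u s) 0 j).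
  by have := is_derive_coord 0 j (du s); rewrite !mxE; apply.
have db (s : R) : is_derive s 1 (fun t => linmx A (u t) 0 j) (u s 0 j + linmx A (u s) 0 j).
  have := is_derive_mulmx_coord A j (du s); move=> /is_derive_eq; apply.
  by rewrite mulmxBl (A2 (u s) : _ *m A *m A = _) !mxE opprK addrC.
have := planar_invariant da db (- (pi *+ 2)).
rewrite opprK cosN sinN cos2pi sin2pi oppr0 mul0r addr0 mul1r => <-.
by rewrite mulrA -expRD addNr expR0 mul1r.
Qed.

Definition rotation_flow (z : V) (s : R) : V :=
  (expR s * cos s) *: z - (expR s * sin s) *: linmx A z.

Lemma rotation_flow0 (z : V) : rotation_flow z 0 = z.
Proof. by rewrite /rotation_flow sin0 cos0 expR0 mulr0 mulr1 scale0r subr0 scale1r. Qed.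

Lemma is_derive_rotation_flow (z : V) (s : R) :
  is_derive s 1 (rotation_flow z) (rotation_flow z s - linmx A (rotation_flow z s)).
Proof.
have := is_deriveB (is_deriveZl z (is_deriveM (is_derive_expR s) (is_derive_cos s)))
                   (is_deriveZl (linmx A z) (is_deriveM (is_derive_expR s) (is_derive_sin s))).
move=> /is_derive_eq; apply; rewrite /rotation_flow {3}/linmx mulmxBl -!scalemxAl.
rewrite (A2 z : _ *m A *m A = _).
by apply/matrixP => i j; rewrite !mxE /GRing.scale /=; ring.
Qed.

Lemma euler_equivariant_homogeneous (g : V -> V) : smooth g ->
  (forall z, 'D_(z - linmx A z) g z = g z - linmx A (g z)) ->
  forall z, g (expR (- (pi *+ 2)) *: z) = expR (- (pi *+ 2)) *: g z.
Proof.
move=> g_smooth g_euler z.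
have dgflow (s : R) : is_derive s 1 (g \o rotation_flow z)
                  (g (rotation_flow z s) - linmx A (g (rotation_flow z s))).
  have := is_derive1_comp_diff (g_smooth [::] _) (is_derive_rotation_flow z s).
  by rewrite -deriveE ?g_euler //; exact: g_smooth [::] _.
have := expansion_curve dgflow; rewrite /= rotation_flow0 => <-.
by rewrite (expansion_curve (is_derive_rotation_flow z)) rotation_flow0.
Qed.

End rotation_flow.

Section theta_automorphism_group.
Variables (R : realType) (n : nat) (Om A : 'M[R]_n).
Local Notation V := 'rV[R]_n.
Hypotheses (Om_alt : forall x : V, sform Om x x = 0) (Om_unit : Om \in unitmx).
Hypothesis A_skew : forall x y : V, sform Om (linmx A x) y + sform Om x (linmx A y) = 0.
Hypothesis A2 : forall x : V, linmx A (linmx A x) = - x.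

Lemma Aut_theta_linmx g : Aut_theta Om A g -> g = linmx (lin1_mx ('d g 0)).
Proof.
move=> [[g_smooth [h [gK hK h_smooth]]] g_theta].
have c01 : 0 < expR (- (pi *+ 2) : R) < 1.
  by rewrite expR_gt0 /= expR_lt1 oppr_lt0 mulrn_wgt0 // pi_gt0.
have g_euler := preserves_theta_euler Om_alt Om_unit A_skew g_smooth g_theta h_smooth gK hK.
have g_hom := euler_equivariant_homogeneous A2 g_smooth g_euler.
apply/funext => z; rewrite (homogeneous_derive (g := g) c01 (g_smooth [::] 0) g_hom z).
by rewrite (deriveE _ (g_smooth [::] 0)) /linmx mul_rV_lin1.
Qed.

Lemma Aut_theta_sub_Sp : Aut_theta Om A `<=` [set g | Sp Om g /\ g \o linmx A = linmx A \o g].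
Proof.
move=> g g_aut; have gM := Aut_theta_linmx g_aut.
move: g_aut => [[g_smooth [h [gK hK h_smooth]]] g_theta].
set M := lin1_mx _ in gM.
split.
- exists M; split => // [|x y].
  + rewrite -row_free_unit; apply: inj_row_free => v vM0.
    have g0 : forall z, h (linmx M z) = z by move=> z; rewrite -gM gK.
    by rewrite -(g0 v) -(g0 0) /linmx vM0 mul0mx.
  + have := preserves_theta_symplectic Om_alt A_skew g_smooth g_theta 0 y x.
    by rewrite gM !derive_linmx.
- apply/funext => x /=.
  have := preserves_theta_euler Om_alt Om_unit A_skew g_smooth g_theta h_smooth gK hK x.
  rewrite gM derive_linmx /linmx mulmxBl => /addrI /oppr_inj.
  by move=> ->.
Qed.

Lemma Sp_comm_sub_Aut_theta :
  [set g | Sp Om g /\ g \o linmx A = linmx A \o g] `<=` Aut_theta Om A.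
Proof.
move=> g [[M [M_unit -> M_sp]] MA]; split.
- split; first exact: smooth_linmx.
  exists (linmx (invmx M)); split; last exact: smooth_linmx.
  + by move=> x; rewrite /linmx mulmxK.
  + by move=> x; rewrite /linmx mulmxKV.
- move=> z v; rewrite diff_linmx /thetaA.
  have -> : linmx A (linmx M z) = linmx M (linmx A z) by have := congr1 (@^~ z) MA.
  have -> : linmx M z - linmx M (linmx A z) = linmx M (z - linmx A z).
    by rewrite /linmx mulmxBl.
  by rewrite M_sp.
Qed.

End theta_automorphism_group.

Unset Implicit Arguments.

Theorem theorem3 (R : realType) (n : nat) (Om A : 'M[R]_n) :
  symplectic_form Om ->
  (forall x y : 'rV[R]_n, sform Om (linmx A x) y + sform Om x (linmx A y) = 0) ->
  (forall x : 'rV[R]_n, linmx A (linmx A x) = - x) ->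
  Aut_theta Om A = [set g | Sp Om g /\ g \o linmx A = linmx A \o g].
Proof.
move=> [Om_alt Om_unit] A_skew A2; apply/seteqP; split.
- exact: Aut_theta_sub_Sp.
- exact: Sp_comm_sub_Aut_theta.
Qed.
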